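(* Consider the Byzantine setting and Byzantine-resilient algorithm of the context, with aggregation rules having contraction constant $\rho$ and virtual weight matrix $E$, and let $\Lambda^k\in\mathbb R^{H\times D}$ be the matrix with rows $(\lambda_i^k)^\top$, $i\in\mathcal H$. Assume $\kappa:=\|E-\frac1H\mathbf 1\mathbf 1^\top E\|^2<1$, $\rho<\frac{1-\kappa}{8\sqrt H}$, and set $\epsilon:=1-\kappa-8\rho\sqrt H$, assumed to lie in $(0,1)$. Assume moreover that for all $k\ge0$ the step sizes satisfy $$\frac{18(\gamma^k)^2}{\epsilon\,u_f^2J^2}\le\frac{(2-\epsilon)\epsilon^2}{3(3-\epsilon)}\qquad\text{and}\qquad1\le\frac{(\gamma^k)^2}{(\gamma^{k+1})^2}\le\frac{2}{1+(1-\epsilon^2)}.$$ Then for every $k\ge0$, $$\Big\|\Lambda^{k+1}-\tfrac1H\mathbf 1\mathbf 1^\top\Lambda^{k+1}\Big\|_F^2\le\frac{18(\gamma^{k+1})^2\delta^2H^3}{\epsilon^3J^2}.$$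
   Context: Byzantine setting. $J$ agents on an undirected connected graph with neighbor sets $\mathcal N_i$; honest agents $\mathcal H=\{1,\dots,H\}$, Byzantine agents $\mathcal B=\{H+1,\dots,J\}$, honest subgraph connected. For $i\in\mathcal H$: $f_i:\mathbb R^D\to\mathbb R$ is $u_f$-strongly convex and $L_f$-smooth, $C_i\subset\mathbb R^D$ nonempty compact convex; $s\in\mathbb R^D$. $g_i(\lambda)=\frac1H\max_{\theta\in C_i}\{-\lambda^\top\theta-f_i(\theta)\}+\frac1H\lambda^\top s$, $\nabla g_i(\lambda)=\frac1H s-\frac1H\arg\min_{\theta\in C_i}\{\lambda^\top\theta+f_i(\theta)\}$, $\delta^2:=\sup_{\lambda}\max_{i\in\mathcal H}\|\nabla g_i(\lambda)-\frac1H\sum_{j\in\mathcal H}\nabla g_j(\lambda)\|^2<\infty$. Contraction property: $\{AGG_i\}_{i\in\mathcal H}$ has contraction constant $\rho\ge0$ and virtual weight matrix $E=[e_{ij}]\in\mathbb R^{H\times H}$ if $e_{ij}\in(0,1]$ for $j\in(\mathcal N_i\cap\mathcal H)\cup\{i\}$, $e_{ij}=0$ otherwise, $\sum_je_{ij}=1$, and for every $i\in\mathcal H$, all honest inputs $\lambda_j$ and arbitrary Byzantine inputs ($\check\lambda_j=\lambda_j$ for honest $j$, arbitrary for Byzantine $j$), $\|AGG_i(\lambda_i,\{\check\lambda_j\}_{j\in\mathcal N_i})-\bar\lambda_i\|\le\rho\max_{j\in(\mathcal N_i\cap\mathcal H)\cup\{i\}}\|\lambda_j-\bar\lambda_i\|$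 with $\bar\lambda_i=\sum_{j}e_{ij}\lambda_j$. Algorithm: common initialization $\lambda_i^0=\lambda^0$ for $i\in\mathcal H$; $\theta_i^k=\arg\min_{\theta\in C_i}\{\theta^\top\lambda_i^k+f_i(\theta)\}$, $\lambda_i^{k+1/2}=\lambda_i^k-\gamma^k(\frac1Js-\frac1J\theta_i^k)$, $\lambda_i^{k+1}=AGG_i(\lambda_i^{k+1/2},\{\check\lambda_j^{k+1/2}\}_{j\in\mathcal N_i})$ with $\check\lambda_j^{k+1/2}$ arbitrary for Byzantine $j$. $\|\cdot\|$ is the spectral norm for matrices, $\|\cdot\|_F$ Frobenius, $\mathbf 1\in\mathbb R^H$ all-ones. *)

From HB Require Import structures.
From mathcomp Require Import all_boot all_order all_algebra.
From mathcomp Require Import all_classical all_reals all_analysis.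
Set Implicit Arguments. Unset Strict Implicit. Unset Printing Implicit Defensive.
Import Order.TTheory GRing.Theory Num.Theory.
Import numFieldNormedType.Exports.
Local Open Scope classical_set_scope.
Local Open Scope ring_scope.

Section Defs.
Variable R : realType.

Definition dotv (D : nat) (u v : 'rV[R]_D) : R := \sum_(j < D) u 0 j * v 0 j.
Definition vnorm (D : nat) (v : 'rV[R]_D) : R := Num.sqrt (dotv v v).
Definition cnorm (n : nat) (v : 'cV[R]_n) : R := Num.sqrt (\sum_(i < n) v i 0 ^+ 2).

Definition spec_norm (m n : nat) (A : 'M[R]_(m, n)) : R :=
  sup [set cnorm (A *m x) | x in [set x : 'cV[R]_n | cnorm x <= 1]].

Definition frob2 (m n : nat) (A : 'M[R]_(m, n)) : R :=
  \sum_(i < m) \sum_(j < n) A i j ^+ 2.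

Definition strongly_convex (D : nat) (u : R) (f : 'rV[R]_D -> R) : Prop :=
  0 < u /\
  forall (x y : 'rV[R]_D) (t : R), 0 <= t -> t <= 1 ->
    f (t *: x + (1 - t) *: y) <=
      t * f x + (1 - t) * f y - u / 2 * t * (1 - t) * vnorm (x - y) ^+ 2.

Definition L_smooth (D : nat) (L : R) (f : 'rV[R]_D -> R) : Prop :=
  exists gf : 'rV[R]_D -> 'rV[R]_D,
    (forall x, differentiable f x /\ forall h, 'd f x h = dotv (gf x) h) /\
    (forall x y, vnorm (gf x - gf y) <= L * vnorm (x - y)).

Definition is_argmin (D : nat) (C : set 'rV[R]_D) (f : 'rV[R]_D -> R)
  (lam th : 'rV[R]_D) : Prop :=
  C th /\ forall th', C th' -> dotv lam th + f th <= dotv lam th' + f th'.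

(* input vector seen by an aggregator: honest values for honest agents
   (indices < H), arbitrary values b j for Byzantine agents *)
Definition checked (D H J : nat) (lam : 'I_H -> 'rV[R]_D) (b : 'I_J -> 'rV[R]_D)
  (j : 'I_J) : 'rV[R]_D :=
  match @insub nat (fun n => n < H)%N 'I_H (nat_of_ord j) with
  | Some h => lam h
  | None => b j
  end.

Definition wavg (D H : nat) (E : 'M[R]_H) (i : 'I_H) (lam : 'I_H -> 'rV[R]_D) :=
  \sum_(j < H) E i j *: lam j.

Definition stack (D H : nat) (lam : 'I_H -> 'rV[R]_D) : 'M[R]_(H, D) :=
  \matrix_(i < H, j < D) lam i 0 j.

Definition dev (H n : nat) (M : 'M[R]_(H, n)) : 'M[R]_(H, n) :=
  M - (H%:R)^-1 *: (const_mx 1 *m M).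

End Defs.

From HB Require Import structures.
From mathcomp Require Import all_boot all_order all_algebra.
From mathcomp Require Import all_classical all_reals all_analysis.
From mathcomp Require Import ring lra.
Set Implicit Arguments. Unset Strict Implicit. Unset Printing Implicit Defensive.
Import Order.TTheory GRing.Theory Num.Theory.
Import numFieldNormedType.Exports.
Local Open Scope classical_set_scope.
Local Open Scope ring_scope.

(* Write V(x) for the consensus error [dispersion x], i.e. the squared Frobenius
   norm of the deviation of the stacked iterates from their mean row.  One
   iteration consists of a local dual gradient step followed by aggregation.
   The virtual averaging by E multiplies V by at most kappa, and the
   aggregation error, at most rho times the largest deviation from the
   weighted average, adds 8 rho sqrt H; so aggregation contracts V by
   1 - eps.  The gradient step adds gamma^2 times the dispersion of the dual
   gradients, which is at most a heterogeneity term in delta^2 plus, since the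
   argmin of a u-strongly convex problem is (2/u)-Lipschitz in the dual
   variable, a multiple of V.  The step-size conditions make the bound
   18 gamma_k^2 delta^2 H^3 / (eps^3 J^2) an invariant of this recursion. *)

Section EuclideanRow.
Variables (R : realType) (D : nat).
Implicit Types (u v w : 'rV[R]_D).

Definition sqnorm v := dotv v v.

Lemma dotvC u v : dotv u v = dotv v u.
Proof. by apply: eq_bigr => j _; rewrite mulrC. Qed.

Lemma dotvDl u v w : dotv (u + v) w = dotv u w + dotv v w.
Proof. by rewrite /dotv -big_split; apply: eq_bigr => j _; rewrite mxE mulrDl. Qed.

Lemma dotvZl a u w : dotv (a *: u) w = a * dotv u w.
Proof. by rewrite /dotv mulr_sumr; apply: eq_bigr => j _; rewrite mxE mulrA. Qed.

Lemma dotvNl u w : dotv (- u) w = - dotv u w.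
Proof. by rewrite -scaleN1r dotvZl mulN1r. Qed.

Lemma dotvBl u v w : dotv (u - v) w = dotv u w - dotv v w.
Proof. by rewrite dotvDl dotvNl. Qed.

Lemma dotvDr u v w : dotv w (u + v) = dotv w u + dotv w v.
Proof. by rewrite !(dotvC w) dotvDl. Qed.

Lemma dotvZr a u w : dotv w (a *: u) = a * dotv w u.
Proof. by rewrite !(dotvC w) dotvZl. Qed.

Lemma dotvBr u v w : dotv w (u - v) = dotv w u - dotv w v.
Proof. by rewrite !(dotvC w) dotvBl. Qed.

Lemma dotv0l w : dotv 0 w = 0.
Proof. by rewrite /dotv big1 // => j _; rewrite mxE mul0r. Qed.

Lemma dotv_suml n (F : 'I_n -> 'rV[R]_D) w :
  dotv (\sum_(i < n) F i) w = \sum_(i < n) dotv (F i) w.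
Proof. by elim/big_rec2: _ => [|i y1 y2 _ <-]; rewrite ?dotv0l ?dotvDl. Qed.

Lemma sqnorm_ge0 v : 0 <= sqnorm v.
Proof. by apply: sumr_ge0 => j _; rewrite -expr2 sqr_ge0. Qed.

Lemma sqnorm_eq0 v : sqnorm v = 0 -> v = 0.
Proof.
move=> /psumr_eq0P v0; apply/rowP => j; rewrite mxE.
have /eqP : v 0 j * v 0 j = 0 by apply: v0 => // k _; rewrite -expr2 sqr_ge0.
by rewrite -expr2 sqrf_eq0 => /eqP.
Qed.

Lemma sqnormZ a v : sqnorm (a *: v) = a ^+ 2 * sqnorm v.
Proof. by rewrite /sqnorm dotvZl dotvZr mulrA -expr2. Qed.

Lemma sqnormN v : sqnorm (- v) = sqnorm v.
Proof. by rewrite -scaleN1r sqnormZ sqrrN expr1n mul1r. Qed.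

Lemma sqnormB_sym u v : sqnorm (u - v) = sqnorm (v - u).
Proof. by rewrite -sqnormN opprB. Qed.

Lemma sqnormD u v : sqnorm (u + v) = sqnorm u + 2 * dotv u v + sqnorm v.
Proof. rewrite /sqnorm dotvDl !dotvDr (dotvC v u); lra. Qed.

Lemma sqnormB u v : sqnorm (u - v) = sqnorm u - 2 * dotv u v + sqnorm v.
Proof. by rewrite sqnormD sqnormN dotvC dotvNl dotvC mulrN. Qed.

Lemma dotv_young u v b : 0 < b -> 2 * dotv u v <= b * sqnorm u + b^-1 * sqnorm v.
Proof.
move=> b0; have bV : b * b^-1 = 1 by rewrite mulfV ?gt_eqF.
have bV0 : 0 <= b^-1 by rewrite invr_ge0 ltW.
have := sqnorm_ge0 (b *: u - v); rewrite sqnormB sqnormZ dotvZl => h.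
have := mulr_ge0 bV0 h.
have -> : b^-1 * (b ^+ 2 * sqnorm u - 2 * (b * dotv u v) + sqnorm v)
        = (b * b^-1) * (b * sqnorm u) - 2 * (b * b^-1) * dotv u v + b^-1 * sqnorm v by ring.
rewrite bV; lra.
Qed.

Lemma sqnormD_le u v b : 0 < b ->
  sqnorm (u + v) <= (1 + b) * sqnorm u + (1 + b^-1) * sqnorm v.
Proof. by move=> b0; have := dotv_young u v b0; rewrite sqnormD; lra. Qed.

Lemma sqnorm_convex_le n (e : 'I_n -> R) (v : 'I_n -> 'rV[R]_D) :
  (forall l, 0 <= e l) -> \sum_(l < n) e l = 1 ->
  sqnorm (\sum_(l < n) e l *: v l) <= \sum_(l < n) e l * sqnorm (v l).
Proof.
move=> e0 e1; set m := \sum_(l < n) e l *: v l.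
have : 0 <= \sum_(l < n) e l * sqnorm (v l - m).
  by apply: sumr_ge0 => l _; rewrite mulr_ge0 ?sqnorm_ge0.
have ex l : e l * sqnorm (v l - m)
          = e l * sqnorm (v l) - 2 * dotv (e l *: v l) m + e l * sqnorm m.
  by rewrite sqnormB dotvZl; ring.
rewrite (eq_bigr _ (fun l _ => ex l)) big_split sumrB /= -mulr_sumr -dotv_suml.
by rewrite -mulr_suml e1 -/m /sqnorm; lra.
Qed.

Lemma vnorm_sqr v : vnorm v ^+ 2 = sqnorm v.
Proof. by rewrite /vnorm sqr_sqrtr // sqnorm_ge0. Qed.

End EuclideanRow.

Section Dispersion.
Variables (R : realType) (D H : nat).
Implicit Types (x y z : 'I_H -> 'rV[R]_D).

Definition mean z := (H%:R)^-1 *: \sum_(i < H) z i.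

Definition dispersion z := \sum_(i < H) sqnorm (z i - mean z).

Lemma meanD x y : mean (fun i => x i + y i) = mean x + mean y.
Proof. by rewrite /mean big_split scalerDr. Qed.

Lemma meanZ a z : mean (fun i => a *: z i) = a *: mean z.
Proof. by rewrite /mean -scaler_sumr !scalerA mulrC. Qed.

Lemma dispersion_ge0 z : 0 <= dispersion z.
Proof. by apply: sumr_ge0 => i _; apply: sqnorm_ge0. Qed.

Lemma dispersionZ a z : dispersion (fun i => a *: z i) = a ^+ 2 * dispersion z.
Proof.
rewrite /dispersion meanZ mulr_sumr.
by apply: eq_bigr => i _; rewrite -scalerBr sqnormZ.
Qed.

Lemma dispersionD_le x y b : 0 < b ->
  dispersion (fun i => x i + y i) <= (1 + b) * dispersion x + (1 + b^-1) * dispersion y.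
Proof.
move=> b0; rewrite /dispersion meanD !mulr_sumr -big_split /=.
apply: ler_sum => i _; rewrite opprD addrACA; exact: sqnormD_le.
Qed.

Lemma dispersion_le_sum z : (0 < H)%N -> dispersion z <= \sum_(i < H) sqnorm (z i).
Proof.
move=> H0; set m := mean z.
have ez i : sqnorm (z i) = sqnorm (z i - m) + 2 * dotv (z i - m) m + sqnorm m.
  by rewrite -sqnormD subrK.
have sum_dev0 : \sum_(i < H) (z i - m) = 0.
  rewrite sumrB sumr_const card_ord /m /mean -scaler_nat scalerA mulfV ?scale1r ?subrr //.
  by rewrite pnatr_eq0 -lt0n.
rewrite (eq_bigr _ (fun i _ => ez i)) !big_split /= -mulr_sumr -dotv_suml sum_dev0.
by rewrite dotv0l mulr0 addr0 lerDl sumr_ge0 // => i _; apply: sqnorm_ge0.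
Qed.

Lemma dispersion_const z c : (0 < H)%N -> (forall i, z i = c) -> dispersion z = 0.
Proof.
move=> H0 zc; have mc : mean z = c.
  rewrite /mean (eq_bigr (fun _ => c)) => [|j _]; last by rewrite zc.
  rewrite sumr_const card_ord -(scaler_nat H c) scalerA mulVf ?scale1r //.
  by rewrite pnatr_eq0 -lt0n.
by rewrite /dispersion big1 // => i _; rewrite zc mc subrr /sqnorm dotv0l.
Qed.

Lemma sqnorm_sub_mean_le z j : sqnorm (z j - mean z) <= dispersion z.
Proof.
by rewrite /dispersion (bigD1 j) //= lerDl sumr_ge0 // => i _; apply: sqnorm_ge0.
Qed.

Lemma sqnorm_sub_le_dispersion z j l : sqnorm (z j - z l) <= 4 * dispersion z.
Proof.
have -> : z j - z l = (z j - mean z) + (- (z l - mean z)) by rewrite opprB addrA subrK.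
have := sqnormD_le (z j - mean z) (- (z l - mean z)) ltr01.
rewrite invr1 sqnormN.
by have := sqnorm_sub_mean_le z j; have := sqnorm_sub_mean_le z l; lra.
Qed.

Lemma dispersion_sub_scale_le x g a b : 0 < b ->
  dispersion (fun i => x i - a *: g i) <=
    (1 + b) * dispersion x + (1 + b^-1) * (a ^+ 2 * dispersion g).
Proof.
move=> b0; rewrite -(sqrrN a) -dispersionZ.
under eq_fun => i do rewrite -scaleNr.
exact: dispersionD_le.
Qed.

End Dispersion.

Section StackedMatrices.
Variable R : realType.

Lemma frob2_dev_stack D H (z : 'I_H -> 'rV[R]_D) : frob2 (dev (stack z)) = dispersion z.
Proof.
apply: eq_bigr => i _; apply: eq_bigr => j _.
rewrite -expr2 /mean !mxE summxE; congr ((_ - _ * _) ^+ _).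
by apply: eq_bigr => l _; rewrite !mxE mul1r.
Qed.

Lemma stack_wavg D H (E : 'M[R]_H) (z : 'I_H -> 'rV[R]_D) :
  stack (fun i => wavg E i z) = E *m stack z.
Proof.
apply/matrixP => i j; rewrite !mxE /wavg summxE.
by apply: eq_bigr => l _; rewrite !mxE.
Qed.

(* Row-stochasticity of [E] means [E] fixes the all-ones matrix, which makes
   [dev] commute with [E] up to subtracting the mean row of [E]. *)
Lemma dev_mulmx D H (E : 'M[R]_H) (M : 'M[R]_(H, D)) : (0 < H)%N ->
  (forall i, \sum_(j < H) E i j = 1) ->
  dev (E *m M) = (E - (H%:R)^-1 *: (const_mx 1 *m E)) *m dev M.
Proof.
move=> H0 Erow; set U := (const_mx 1 : 'M[R]_(H, H)).
have EU : E *m U = U.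
  apply/matrixP => i j; rewrite !mxE -[RHS](Erow i).
  by apply: eq_bigr => l _; rewrite mxE mulr1.
have UU : U *m U = H%:R *: U.
  apply/matrixP => i j; rewrite !mxE (eq_bigr (fun _ => 1)) => [|l _]; last by rewrite !mxE mulr1.
  by rewrite sumr_const card_ord mulr1.
rewrite /dev mulmxBr !mulmxBl -!scalemxAl -!scalemxAr !mulmxA EU -(mulmxA U E U) EU UU.
by rewrite -scalemxAl scalerA mulVf ?pnatr_eq0 -?lt0n // scale1r subrr subr0.
Qed.

Lemma cnorm_ge0 n (v : 'cV[R]_n) : 0 <= cnorm v.
Proof. exact: sqrtr_ge0. Qed.

Lemma cnorm_sqr n (v : 'cV[R]_n) : cnorm v ^+ 2 = \sum_(i < n) v i 0 ^+ 2.
Proof. by rewrite /cnorm sqr_sqrtr // sumr_ge0 // => i _; rewrite sqr_ge0. Qed.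

Lemma cnormZ n a (v : 'cV[R]_n) : cnorm (a *: v) = `|a| * cnorm v.
Proof.
rewrite /cnorm -sqrtr_sqr -sqrtrM ?sqr_ge0 // mulr_sumr; congr Num.sqrt.
by apply: eq_bigr => i _; rewrite mxE exprMn.
Qed.

Lemma cnorm0 n : cnorm (0 : 'cV[R]_n) = 0.
Proof. by rewrite /cnorm big1 ?sqrtr0 // => i _; rewrite mxE expr0n. Qed.

Lemma cnorm_eq0 n (v : 'cV[R]_n) : cnorm v = 0 -> v = 0.
Proof.
move=> v0; have : cnorm v ^+ 2 = 0 by rewrite v0 expr0n.
rewrite cnorm_sqr => /psumr_eq0P vi0; apply/matrixP => i j.
rewrite (ord1 j) mxE; apply/eqP; rewrite -sqrf_eq0; apply/eqP.
by apply: vi0 => // k _; rewrite sqr_ge0.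
Qed.

Lemma cnorm_mulmx_ub m n (A : 'M[R]_(m, n)) (x : 'cV[R]_n) : cnorm x <= 1 ->
  cnorm (A *m x) <= Num.sqrt (\sum_(i < m) (\sum_(j < n) `|A i j|) ^+ 2).
Proof.
move=> x1; apply: ler_wsqrtr; apply: ler_sum => i _.
have xj j : `|x j 0| <= 1.
  have : x j 0 ^+ 2 <= 1.
    have : cnorm x ^+ 2 <= 1 by rewrite expr_le1 // cnorm_ge0.
    rewrite cnorm_sqr; apply: le_trans.
    by rewrite (bigD1 j) //= lerDl sumr_ge0 // => k _; rewrite sqr_ge0.
  by rewrite -real_normK ?num_real //; have := normr_ge0 (x j 0); nra.
have Axi : `|(A *m x) i 0| <= \sum_(j < n) `|A i j|.
  rewrite mxE; apply: le_trans (ler_norm_sum _ _ _) _; apply: ler_sum => j _.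
  by rewrite normrM; have := xj j; have := normr_ge0 (A i j); have := normr_ge0 (x j 0); nra.
by rewrite -real_normK ?num_real //; have := normr_ge0 ((A *m x) i 0); nra.
Qed.

Lemma cnorm_mulmx_le m n (A : 'M[R]_(m, n)) (v : 'cV[R]_n) :
  cnorm (A *m v) <= spec_norm A * cnorm v.
Proof.
have [->|v0] := eqVneq v 0; first by rewrite mulmx0 !cnorm0 mulr0.
have c0 : 0 < cnorm v.
  by rewrite lt_neqAle cnorm_ge0 andbT eq_sym; apply: contra v0 => /eqP/cnorm_eq0 ->.
set x := (cnorm v)^-1 *: v.
have x1 : cnorm x = 1 by rewrite cnormZ ger0_norm ?invr_ge0 ?ltW // mulVf // gt_eqF.
have hs : has_sup [set cnorm (A *m x) | x in [set x : 'cV[R]_n | cnorm x <= 1]].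
  split; first by exists (cnorm (A *m 0)), 0 => //=; rewrite cnorm0.
  exists (Num.sqrt (\sum_(i < m) (\sum_(j < n) `|A i j|) ^+ 2)).
  by move=> y [z /= z1 <-]; apply: cnorm_mulmx_ub.
have /(sup_upper_bound hs) : [set cnorm (A *m x) | x in [set x | cnorm x <= 1]] (cnorm (A *m x)).
  by exists x => //=; rewrite x1.
rewrite /x -scalemxAr cnormZ ger0_norm; last by rewrite invr_ge0 ltW.
by rewrite mulrC ler_pdivrMr.
Qed.

Lemma frob2_col m n (Y : 'M[R]_(m, n)) : frob2 Y = \sum_(j < n) cnorm (col j Y) ^+ 2.
Proof.
rewrite /frob2 exchange_big; apply: eq_bigr => j _; rewrite cnorm_sqr.
by apply: eq_bigr => i _; rewrite mxE.
Qed.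

Lemma frob2_mulmx_le m n p (A : 'M[R]_(m, n)) (Y : 'M[R]_(n, p)) :
  frob2 (A *m Y) <= spec_norm A ^+ 2 * frob2 Y.
Proof.
rewrite !frob2_col mulr_sumr; apply: ler_sum => j _.
have -> : col j (A *m Y) = A *m col j Y by rewrite !colE mulmxA.
rewrite -exprMn lerXn2r ?nnegrE ?cnorm_ge0 ?cnorm_mulmx_le //.
by apply: le_trans (cnorm_mulmx_le A (col j Y)); apply: cnorm_ge0.
Qed.

End StackedMatrices.

Section StronglyConvexArgmin.
Variables (R : realType) (D : nat).
Variables (u : R) (f : 'rV[R]_D -> R) (C : set 'rV[R]_D).
Hypotheses (fconv : strongly_convex u f) (Cconv : convex_set C).

Lemma convex_set_midpoint x y : C x -> C y -> C (2^-1 *: x + (1 - 2^-1) *: y).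
Proof.
move=> Cx Cy; have h0 : 0 <= (2 : R)^-1 by rewrite invr_ge0 ler0n.
have h1 : (2 : R)^-1 <= 1 by rewrite invf_le1 ?ler1n.
by have := @Cconv x y (Itv01 h0 h1); rewrite !inE; apply.
Qed.

(* Compare the minimum at [p] with the value at the midpoint of [p] and [q]. *)
Lemma argmin_quadratic_growth a p q : is_argmin C f a p -> C q ->
  dotv a p + f p <= dotv a q + f q - u / 4 * sqnorm (q - p).
Proof.
move=> [Cp pmin] Cq; have := pmin _ (convex_set_midpoint Cq Cp).
have := fconv.2 q p (2 : R)^-1; rewrite invr_ge0 ler0n invf_le1 ?ler1n // => /(_ isT isT).
rewrite vnorm_sqr dotvDr !dotvZr.
have -> : 1 - (2 : R)^-1 = 2^-1 by field.
set S := sqnorm _; have -> : u / 2 * 2^-1 * 2^-1 * S = u * S / 8 by field.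
have -> : u / 4 * S = u * S / 4 by rewrite mulrAC.
lra.
Qed.

Lemma argmin_lipschitz a b p q : is_argmin C f a p -> is_argmin C f b q ->
  u ^+ 2 * sqnorm (p - q) <= 4 * sqnorm (a - b).
Proof.
move=> ap bq; have u0 : 0 < u := fconv.1.
have := argmin_quadratic_growth ap bq.1; have := argmin_quadratic_growth bq ap.1.
rewrite (sqnormB_sym q) => gp gq.
have monotone : u / 2 * sqnorm (p - q) <= dotv (a - b) (q - p).
  rewrite dotvBl !dotvBr; lra.
have := dotv_young (a - b) (q - p) (_ : 0 < 2 / u); rewrite invf_div (sqnormB_sym q).
move=> /(_ (divr_gt0 (ltr0Sn _ 1) u0)) young.
have : u * (u / 2 * sqnorm (p - q)) <= u * (2 / u * sqnorm (a - b)).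
  by rewrite ler_pM2l //; lra.
have -> : u * (2 / u * sqnorm (a - b)) = 2 * sqnorm (a - b) by field; rewrite gt_eqF.
have -> : u * (u / 2 * sqnorm (p - q)) = u ^+ 2 * sqnorm (p - q) / 2 by ring.
lra.
Qed.

End StronglyConvexArgmin.

Section Aggregation.
Variables (R : realType) (D H : nat).
Implicit Types (w r mu y : 'I_H -> 'rV[R]_D).

Lemma dispersion_eq0 r : dispersion r = 0 -> forall i, r i = mean r.
Proof.
move=> /psumr_eq0P r0 i; apply/eqP; rewrite -subr_eq0; apply/eqP/sqnorm_eq0.
by apply: r0 => // j _; apply: sqnorm_ge0.
Qed.

Lemma dispersion_perturb_le w r kap b V : 0 <= b -> kap + b <= 3 ->
  dispersion w <= kap * V -> dispersion r <= b ^+ 2 * V ->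
  dispersion (fun i => w i + r i) <= (kap + 4 * b) * V.
Proof.
move=> b0 kb wV rV; have [b00|bpos] := eqVneq b 0.
  have /dispersion_eq0 rc : dispersion r = 0.
    by apply/eqP; rewrite eq_le dispersion_ge0 andbT; move: rV; rewrite b00 expr0n mul0r.
  rewrite b00 mulr0 addr0 /dispersion meanD.
  under eq_bigr => i _ do rewrite opprD addrACA [r i]rc subrr addr0.
  exact: wV.
have {bpos}bpos : 0 < b by rewrite lt_neqAle eq_sym bpos.
apply: le_trans (dispersionD_le _ _ bpos) _.
have V0 : 0 <= V.
  by move: rV; rewrite -(pmulr_rge0 _ (exprn_gt0 2 bpos)); apply: le_trans; apply: dispersion_ge0.
have bV : 0 <= b^-1 by rewrite invr_ge0 ltW.
have := ler_wpM2l (addr_ge0 ler01 (ltW bpos)) wV.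
have := ler_wpM2l (addr_ge0 ler01 bV) rV.
have -> : (1 + b^-1) * (b ^+ 2 * V) = (b ^+ 2 + b) * V by field; rewrite gt_eqF.
have : b * (kap + b) * V <= b * 3 * V by rewrite ler_wpM2r // ler_wpM2l // ltW.
nra.
Qed.

Variable E : 'M[R]_H.
Hypotheses (H0 : (0 < H)%N) (E_ge0 : forall i j, 0 <= E i j)
  (E_row : forall i, \sum_(j < H) E i j = 1).

Lemma sqnorm_sub_wavg_le mu i j : sqnorm (mu j - wavg E i mu) <= 4 * dispersion mu.
Proof.
have -> : mu j - wavg E i mu = \sum_(l < H) E i l *: (mu j - mu l).
  by rewrite (eq_bigr _ (fun l _ => scalerBr _ _ _)) sumrB -scaler_suml E_row scale1r.
apply: le_trans (sqnorm_convex_le _ (E_ge0 i) (E_row i)) _.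
rewrite -[leRHS]mul1r -{1}(E_row i) mulr_suml; apply: ler_sum => l _.
by apply: ler_wpM2l => //; apply: sqnorm_sub_le_dispersion.
Qed.

Lemma dispersion_wavg_le mu :
  dispersion (fun i => wavg E i mu) <=
    spec_norm (E - (H%:R)^-1 *: (const_mx 1 *m E)) ^+ 2 * dispersion mu.
Proof.
rewrite -!frob2_dev_stack stack_wavg dev_mulmx //; exact: frob2_mulmx_le.
Qed.

(* The neighbourhood selected by [Pn] is irrelevant: every deviation from the
   weighted average is controlled by the global dispersion. *)
Lemma dispersion_aggregate_le (Pn : 'I_H -> pred 'I_H) (rho : R) mu y :
  let kappa := spec_norm (E - (H%:R)^-1 *: (const_mx 1 *m E)) ^+ 2 in
  0 <= rho -> kappa + 8 * rho * Num.sqrt H%:R <= 1 ->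
  (forall i, vnorm (y i - wavg E i mu) <=
      rho * \big[Num.max/0]_(j < H | Pn i j) vnorm (mu j - wavg E i mu)) ->
  dispersion y <= (kappa + 8 * rho * Num.sqrt H%:R) * dispersion mu.
Proof.
move=> kappa rho0 small contr; set b := 2 * rho * Num.sqrt H%:R.
have b0 : 0 <= b by rewrite !mulr_ge0 ?sqrtr_ge0.
have err i : sqnorm (y i - wavg E i mu) <= rho ^+ 2 * (4 * dispersion mu).
  have V0 : 0 <= 4 * dispersion mu by rewrite mulr_ge0 ?dispersion_ge0.
  have : vnorm (y i - wavg E i mu) <= rho * Num.sqrt (4 * dispersion mu).
    apply: le_trans (contr i) _; apply: ler_wpM2l => //.
    apply: bigmax_le => [|j _]; first exact: sqrtr_ge0.
    by apply: ler_wsqrtr; apply: sqnorm_sub_wavg_le.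
  move=> h; rewrite -vnorm_sqr -(sqr_sqrtr V0) -exprMn lerXn2r ?nnegrE ?sqrtr_ge0 //.
  exact: mulr_ge0 rho0 (sqrtr_ge0 _).
have err_disp : dispersion (fun i => y i - wavg E i mu) <= b ^+ 2 * dispersion mu.
  apply: le_trans (dispersion_le_sum _ H0) _; apply: le_trans (ler_sum _ (fun i _ => err i)) _.
  rewrite sumr_const card_ord -mulr_natr /b !exprMn sqr_sqrtr ?ler0n //.
  by rewrite le_eqVlt; apply/orP; left; apply/eqP; ring.
have -> : y = fun i => wavg E i mu + (y i - wavg E i mu).
  by apply: funext => i; rewrite addrC subrK.
have -> : 8 * rho * Num.sqrt H%:R = 4 * b by rewrite /b; ring.
apply: dispersion_perturb_le => //; last exact: dispersion_wavg_le.
have : 0 <= kappa by apply: sqr_ge0.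
by move: small b0; rewrite /b; lra.
Qed.

End Aggregation.

Section DualGradient.
Variables (R : realType) (D H J : nat).
Variables (u delta : R) (s : 'rV[R]_D) (f : 'I_H -> 'rV[R]_D -> R)
  (C : 'I_H -> set 'rV[R]_D) (amin : 'I_H -> 'rV[R]_D -> 'rV[R]_D).
Hypotheses (H0 : (0 < H)%N) (J0 : (0 < J)%N)
  (fconv : forall i, strongly_convex u (f i)) (Cconv : forall i, convex_set (C i))
  (aminP : forall i lam, is_argmin (C i) (f i) lam (amin i lam))
  (hetero : forall (lam : 'rV[R]_D) (i : 'I_H),
      let gg := fun j => (H%:R)^-1 *: s - (H%:R)^-1 *: amin j lam in
      vnorm (gg i - (H%:R)^-1 *: \sum_(j < H) gg j) ^+ 2 <= delta ^+ 2).

(* Evaluate every local gradient at the common mean [mean x]: the spread of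
   these is bounded by [delta], and moving each point from [mean x] to [x i]
   costs at most [2 / u] times the distance by [argmin_lipschitz]. *)
Lemma dispersion_dual_grad_le (x : 'I_H -> 'rV[R]_D) :
  dispersion (fun i => (J%:R)^-1 *: s - (J%:R)^-1 *: amin i (x i)) <=
    2 * (delta ^+ 2 * (H%:R) ^+ 3 / (J%:R) ^+ 2) +
    8 / (u ^+ 2 * (J%:R) ^+ 2) * dispersion x.
Proof.
have u0 : 0 < u := (fconv (Ordinal H0)).1.
have Hpos : (0 : R) < H%:R by rewrite ltr0n.
have Jpos : (0 : R) < J%:R by rewrite ltr0n.
set G := fun i => (H%:R)^-1 *: s - (H%:R)^-1 *: amin i (mean x).
set dG := fun i => (H%:R)^-1 *: (amin i (mean x) - amin i (x i)).
have -> : (fun i => (J%:R)^-1 *: s - (J%:R)^-1 *: amin i (x i)) =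
          (fun i => (H%:R / J%:R) *: (G i + dG i)).
  apply: funext => i; rewrite /G /dG scalerBr addrA subrK -!scalerBr scalerA.
  by rewrite mulrAC mulfV ?mul1r // gt_eqF.
have G_disp : dispersion G <= H%:R * delta ^+ 2.
  apply: le_trans (_ : _ <= \sum_(i < H) delta ^+ 2) _.
    by apply: ler_sum => i _; have := hetero (mean x) i; rewrite /= vnorm_sqr.
  by rewrite sumr_const card_ord mulr_natl.
have dG_disp : dispersion dG <= (H%:R)^-2 * (4 / u ^+ 2) * dispersion x.
  apply: le_trans (dispersion_le_sum _ H0) _.
  rewrite /dispersion mulr_sumr; apply: ler_sum => i _.
  rewrite /dG sqnormZ exprVn -mulrA ler_wpM2l ?invr_ge0 ?sqr_ge0 //.
  rewrite mulrAC ler_pdivlMr ?exprn_gt0 // mulrC sqnormB_sym.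
  by apply: (argmin_lipschitz (fconv i) (@Cconv i)); apply: aminP.
have := dispersionD_le G dG ltr01; rewrite invr1 => GdG.
rewrite dispersionZ; apply: le_trans (ler_wpM2l (sqr_ge0 _) GdG) _.
apply: le_trans (ler_wpM2l (sqr_ge0 _) (_ : _ <= 2 * (H%:R * delta ^+ 2) +
   2 * ((H%:R)^-2 * (4 / u ^+ 2) * dispersion x))) _; first lra.
by rewrite le_eqVlt; apply/orP; left; apply/eqP; field; rewrite ?gt_eqF.
Qed.

End DualGradient.

Section StepSizes.
Variable R : realType.

Lemma step_size_ratio_le (e g G : R) : 0 < e -> e < 1 -> 0 <= g ->
  1 <= g / G -> g / G <= 2 / (1 + (1 - e ^+ 2)) -> g * (2 - e ^+ 2) <= 2 * G.
Proof.
move=> e0 e1 g0 r1 r2; have G0 : 0 < G.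
  rewrite lt_neqAle; apply/andP; split.
    by apply: contraTneq r1 => <-; rewrite invr0 mulr0 ler10.
  rewrite leNgt; apply/negP => Gn.
  have : g / G <= 0 by rewrite mulr_ge0_le0 // invr_le0 ltW.
  lra.
rewrite (_ : 1 + (1 - e ^+ 2) = 2 - e ^+ 2) in r2; last by ring.
have e2 : 0 < 2 - e ^+ 2 by nra.
rewrite ler_pdivlMr // in r2.
have -> : g = g / G * G by rewrite mulfVK ?gt_eqF.
by rewrite mulrAC ler_pM2r.
Qed.

Lemma step_size_small (e g a b : R) : 0 < e -> e < 1 ->
  18 * g / (e * a * b) <= (2 - e) * e ^+ 2 / (3 * (3 - e)) ->
  81 * (g / (a * b)) <= e ^+ 3.
Proof.
move=> e0 e1; rewrite (_ : 18 * g / (e * a * b) = 18 * (g / (a * b)) / e).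
  move=> small; have e3 : 0 < 3 * (3 - e) by lra.
  have : (2 - e) * e ^+ 2 / (3 * (3 - e)) <= 2 * e ^+ 2 / 9.
    rewrite ler_pdivrMr // mulrAC ler_pdivlMr //.
    by have : 0 <= e ^+ 2 := sqr_ge0 e; nra.
  move=> /(le_trans small); rewrite ler_pdivrMr // => h.
  have -> : e ^+ 3 = 9 / 2 * (2 * e ^+ 2 / 9 * e) by rewrite exprS; field.
  lra.
by rewrite -mulrA !invfM; ring.
Qed.

(* The consensus error recursion preserves [X <= 18 g P / e^3]; the slack
   [1 - e^2/2] of one step is absorbed by the ratio of consecutive steps. *)
Lemma dispersion_bound_step (e g G P q X Vg Y : R) :
  0 < e -> e < 1 -> 0 <= g -> 0 <= q -> 0 <= P -> 0 <= X ->
  81 * (g * q) <= e ^+ 3 -> g * (2 - e ^+ 2) <= 2 * G ->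
  X <= 18 * g * P / e ^+ 3 -> Vg <= 2 * P + 8 * q * X ->
  Y <= (1 - e) * ((1 + e / 2) * X + (1 + 2 / e) * (g * Vg)) ->
  Y <= 18 * G * P / e ^+ 3.
Proof.
move=> e0 e1 g0 q0 P0 X0 gq gG XZ Vgb Yb.
have e3 : 0 < e ^+ 3 by rewrite exprn_gt0.
set Z := 18 * g * P / e ^+ 3 in XZ.
have Z0 : 0 <= Z by apply: divr_ge0; rewrite ?mulr_ge0 // ltW.
have gP : 2 * (g * P) = e ^+ 3 / 9 * Z.
  by rewrite /Z; field; exact: lt0r_neq0.
have gVg : g * Vg <= 17 / 81 * e ^+ 3 * Z.
  apply: le_trans (_ : g * Vg <= 2 * (g * P) + 8 * (g * q) * X) _.
    by have := ler_wpM2l g0 Vgb; lra.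
  have : 8 * (g * q) * X <= 8 * (e ^+ 3 / 81) * Z by apply: ler_pM; rewrite ?mulr_ge0 //; lra.
  lra.
have Yslack : Y <= (1 - e ^+ 2 / 2) * Z.
  have : (1 + 2 / e) * (g * Vg) <= 17 / 81 * (e ^+ 3 + 2 * e ^+ 2) * Z.
    have -> : 17 / 81 * (e ^+ 3 + 2 * e ^+ 2) * Z = (1 + 2 / e) * (17 / 81 * e ^+ 3 * Z).
      by field; exact: lt0r_neq0.
    by rewrite ler_wpM2l // addr_ge0 ?divr_ge0 ?ltW.
  have : (1 + e / 2) * X <= (1 + e / 2) * Z by rewrite ler_wpM2l //; lra.
  move=> hX hV; have inner : (1 + e / 2) * X + (1 + 2 / e) * (g * Vg)
      <= (1 + e / 2 + 17 / 81 * (e ^+ 3 + 2 * e ^+ 2)) * Z by lra.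
  apply: le_trans Yb _; apply: le_trans (ler_wpM2l _ inner) _; first lra.
  rewrite mulrA; apply: ler_wpM2r => //.
  by rewrite !exprS expr0 !mulr1; nra.
have T0 : 0 <= 9 * P / e ^+ 3 by apply: divr_ge0; rewrite ?mulr_ge0 // ltW.
have -> : 18 * G * P / e ^+ 3 = 2 * G * (9 * P / e ^+ 3) by field; exact: lt0r_neq0.
rewrite (_ : (1 - e ^+ 2 / 2) * Z = g * (2 - e ^+ 2) * (9 * P / e ^+ 3)) in Yslack.
  exact: le_trans Yslack (ler_wpM2r T0 gG).
by rewrite /Z; field; exact: lt0r_neq0.
Qed.

End StepSizes.

Unset Implicit Arguments.
Theorem lemma4
  (R : realType) (D H J : nat) (HJ : (H <= J)%N) (H0 : (0 < H)%N)
  (* undirected connected graph on the J agents; honest agents are 0..H-1 *)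
  (N : 'I_J -> {set 'I_J})
  (Nsym : forall i j, (j \in N i) = (i \in N j))
  (Nirr : forall i, i \notin N i)
  (Nconn : forall i j, connect (fun a b => b \in N a) i j)
  (Hconn : forall i j : 'I_H,
      connect (fun a b : 'I_H => widen_ord HJ b \in N (widen_ord HJ a)) i j)
  (* local objectives and constraint sets of honest agents *)
  (uf Lf : R) (f : 'I_H -> 'rV[R]_D -> R) (C : 'I_H -> set 'rV[R]_D)
  (s : 'rV[R]_D)
  (fconv : forall i, strongly_convex uf (f i))
  (fsmooth : forall i, L_smooth Lf (f i))
  (Cne : forall i, C i !=set0) (Ccpt : forall i, compact (C i))
  (Ccvx : forall i, convex_set (C i))
  (* argmin_{theta in C_i} { lam^T theta + f_i theta } *)
  (amin : 'I_H -> 'rV[R]_D -> 'rV[R]_D)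
  (aminP : forall i lam, is_argmin (C i) (f i) lam (amin i lam))
  (* delta^2 bounds the heterogeneity of the dual gradients
     grad g_i(lam) = (1/H) s - (1/H) amin i lam *)
  (delta : R)
  (hdelta : forall (lam : 'rV[R]_D) (i : 'I_H),
      let gg := fun j => (H%:R)^-1 *: s - (H%:R)^-1 *: amin j lam in
      vnorm (gg i - (H%:R)^-1 *: \sum_(j < H) gg j) ^+ 2 <= delta ^+ 2)
  (* aggregation rules with contraction constant rho and virtual weights E *)
  (AGG : 'I_H -> 'rV[R]_D -> ('I_J -> 'rV[R]_D) -> 'rV[R]_D)
  (rho : R) (E : 'M[R]_H)
  (rho_ge0 : 0 <= rho)
  (Epos : forall i j : 'I_H,
      (widen_ord HJ j \in N (widen_ord HJ i)) || (j == i) ->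
      0 < E i j /\ E i j <= 1)
  (Ezero : forall i j : 'I_H,
      ~~ ((widen_ord HJ j \in N (widen_ord HJ i)) || (j == i)) -> E i j = 0)
  (Erow : forall i, \sum_(j < H) E i j = 1)
  (contr : forall (i : 'I_H) (lam : 'I_H -> 'rV[R]_D) (b : 'I_J -> 'rV[R]_D),
      vnorm (AGG i (lam i) (checked lam b) - wavg E i lam) <=
      rho * \big[Num.max/0]_(j < H |
                 (widen_ord HJ j \in N (widen_ord HJ i)) || (j == i))
               vnorm (lam j - wavg E i lam))
  (* constants *)
  (kappa eps : R)
  (kappa_def : kappa = spec_norm (E - (H%:R)^-1 *: (const_mx 1 *m E)) ^+ 2)
  (kappa_lt1 : kappa < 1)
  (rho_small : rho < (1 - kappa) / (8 * Num.sqrt (H%:R)))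
  (eps_def : eps = 1 - kappa - 8 * rho * Num.sqrt (H%:R))
  (eps_pos : 0 < eps) (eps_lt1 : eps < 1)
  (* step sizes *)
  (gamma : nat -> R)
  (step1 : forall k, 18 * gamma k ^+ 2 / (eps * uf ^+ 2 * (J%:R) ^+ 2)
                     <= (2 - eps) * eps ^+ 2 / (3 * (3 - eps)))
  (step2 : forall k, 1 <= gamma k ^+ 2 / gamma k.+1 ^+ 2 /\
                     gamma k ^+ 2 / gamma k.+1 ^+ 2 <= 2 / (1 + (1 - eps ^+ 2)))
  (* the algorithm, with arbitrary Byzantine messages byz k i j sent by
     Byzantine agent j to honest agent i at iteration k *)
  (lam0 : 'rV[R]_D) (lam : nat -> 'I_H -> 'rV[R]_D)
  (byz : nat -> 'I_H -> 'I_J -> 'rV[R]_D)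
  (init : forall i, lam 0%N i = lam0)
  (update : forall k i,
      let lamh := fun j => lam k j - gamma k *:
                    ((J%:R)^-1 *: s - (J%:R)^-1 *: amin j (lam k j)) in
      lam k.+1 i = AGG i (lamh i) (checked lamh (byz k i))) :
  forall k : nat,
    frob2 (dev (stack (lam k.+1))) <=
    18 * gamma k.+1 ^+ 2 * delta ^+ 2 * (H%:R) ^+ 3 / (eps ^+ 3 * (J%:R) ^+ 2).
Proof.
have J0 : (0 < J)%N := leq_trans H0 HJ.
have E_ge0 i j : 0 <= E i j.
  by have [/Epos[/ltW]|/Ezero->] := boolP ((widen_ord HJ j \in N (widen_ord HJ i)) || (j == i)).
set P := delta ^+ 2 * (H%:R) ^+ 3 / (J%:R) ^+ 2.
have P0 : 0 <= P.
  by apply: mulr_ge0; [apply: mulr_ge0 | rewrite invr_ge0]; rewrite ?sqr_ge0 // exprn_ge0 ?ler0n.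
suff bound n : dispersion (lam n) <= 18 * gamma n ^+ 2 * P / eps ^+ 3.
  move=> k; rewrite frob2_dev_stack (le_trans (bound k.+1)) // le_eqVlt; apply/orP; left.
  by apply/eqP; rewrite /P; field; rewrite lt0r_neq0 ?ltr0n // lt0r_neq0.
elim: n => [|n IH].
  rewrite (dispersion_const H0 init) divr_ge0 ?(ltW (exprn_gt0 3 eps_pos)) //.
  by rewrite mulr_ge0 // mulr_ge0 ?sqr_ge0.
pose grad j := (J%:R)^-1 *: s - (J%:R)^-1 *: amin j (lam n j).
pose lamh j := lam n j - gamma n *: grad j.
have agg : dispersion (lam n.+1) <= (1 - eps) * dispersion lamh.
  have -> : 1 - eps = kappa + 8 * rho * Num.sqrt H%:R by rewrite eps_def; ring.
  rewrite kappa_def; apply: (dispersion_aggregate_le H0 E_ge0 Erow rho_ge0).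
    by rewrite -kappa_def; lra.
  move=> i; have step : lam n.+1 i = AGG i (lamh i) (checked lamh (byz n i)) := update n i.
  by rewrite step; apply: contr.
have local := dispersion_sub_scale_le (lam n) grad (gamma n) (divr_gt0 eps_pos (ltr0n _ 2)).
have grad_disp := dispersion_dual_grad_le H0 J0 fconv Ccvx aminP hdelta (lam n).
apply: (dispersion_bound_step eps_pos eps_lt1 (sqr_ge0 _) _ P0 (dispersion_ge0 _)
  (step_size_small eps_pos eps_lt1 (step1 n))
  (step_size_ratio_le eps_pos eps_lt1 (sqr_ge0 _) (step2 n).1 (step2 n).2) IH grad_disp).
  by rewrite invr_ge0 mulr_ge0 ?sqr_ge0.
rewrite -[2 / eps]invf_div; apply: le_trans agg (ler_wpM2l _ local); lra.
Qed.
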